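(* Let $\phi$ be a topological flow on a compact manifold $M$ (with a metric $\mathrm{dist}$ inducing its topology). If the limit set $L(\phi)$ is a finite set consisting of singularities of $\phi$, each of which is Lyapunov stable or Lyapunov unstable, then $\phi$ has the oriented shadowing property.
   Context: A topological flow is a continuous map $\phi:\mathbb{R}\times M\to M$ with $\phi(0,x)=x$, $\phi(s+t,x)=\phi(s,\phi(t,x))$. A singularity is a point fixed by all $\phi(t,\cdot)$. A singularity $p$ is Lyapunov stable if for every neighborhood $V$ of $p$ there is a neighborhood $U$ of $p$ with $\phi(t,x)\in V$ for all $t\ge0$, $x\in U$; Lyapunov unstable if the same holds for $t\le0$. $L(\phi)$ is the union over $x\in M$ of the $\omega$-limit and $\alpha$-limit sets of $x$. A $d$-pseudotrajectory is a map $\xi:\mathbb{R}\to M$ with $\mathrm{dist}(\xi(t+s),\phi(s,\xi(t)))<d$ for all $t\in\mathbb{R}$, $s\in[0,1]$. $\mathrm{Rep}$ is the set of orientation-preserving homeomorphisms of $\mathbb{R}$. $\phi$ has the oriented shadowing property if for every $\varepsilon>0$ there is $d>0$ such that for every $d$-pseudotrajectory $\xi$ there are $x\in M$, $h\in\mathrm{Rep}$ with $\mathrm{dist}(\xi(t),\phi(h(t),x))<\varepsilon$ for all $t\in\mathbb{R}$. *)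

From HB Require Import structures.
From mathcomp Require Import all_boot all_order all_algebra.
From mathcomp Require Import all_classical all_reals all_analysis.
Set Implicit Arguments. Unset Strict Implicit. Unset Printing Implicit Defensive.
Import Order.TTheory GRing.Theory Num.Theory.
Import numFieldNormedType.Exports.
Local Open Scope classical_set_scope.
Local Open Scope ring_scope.

Section Defs.
Variables (R : realType) (M : topologicalType).

Definition metric_inducing (dist : M -> M -> R) : Prop :=
  [/\ (forall x y, 0 <= dist x y),
      (forall x y, dist x y = 0 <-> x = y),
      (forall x y, dist x y = dist y x),
      (forall x y z, dist x z <= dist x y + dist y z) &
      (forall x (A : set M), nbhs x A <->
         exists2 e : R, 0 < e & [set y | dist x y < e] `<=` A)].

Definition topological_manifold : Prop :=
  exists n : nat, forall x : M, exists U : set M, [/\ open U, U x &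
    exists (f : M -> 'rV[R]_n) (g : 'rV[R]_n -> M),
      [/\ {within U, continuous f}, open (f @` U),
          {within f @` U, continuous g},
          (forall y, U y -> g (f y) = y) &
          (forall v, (f @` U) v -> g v \in U)]].

Definition is_flow (phi : R -> M -> M) : Prop :=
  [/\ continuous (fun p : R * M => phi p.1 p.2),
      (forall x, phi 0 x = x) &
      (forall s t x, phi (s + t) x = phi s (phi t x))].

Definition singularity (phi : R -> M -> M) (p : M) : Prop :=
  forall t, phi t p = p.

Definition lyapunov_stable (phi : R -> M -> M) (p : M) : Prop :=
  forall V, nbhs p V -> exists2 U, nbhs p U &
    forall t x, 0 <= t -> U x -> V (phi t x).

Definition lyapunov_unstable (phi : R -> M -> M) (p : M) : Prop :=
  forall V, nbhs p V -> exists2 U, nbhs p U &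
    forall t x, t <= 0 -> U x -> V (phi t x).

Definition omega_limit (phi : R -> M -> M) (x : M) : set M :=
  \bigcap_(T in [set: R]) closure [set phi t x | t in [set t | T <= t]].

Definition alpha_limit (phi : R -> M -> M) (x : M) : set M :=
  \bigcap_(T in [set: R]) closure [set phi t x | t in [set t | t <= T]].

Definition limit_set (phi : R -> M -> M) : set M :=
  \bigcup_(x in [set: M]) (omega_limit phi x `|` alpha_limit phi x).

Definition pseudotrajectory (dist : M -> M -> R) (phi : R -> M -> M)
  (d : R) (xi : R -> M) : Prop :=
  forall t s, 0 <= s <= 1 -> dist (xi (t + s)) (phi s (xi t)) < d.

End Defs.

Definition Rep (R : realType) (h : R -> R) : Prop :=
  [/\ continuous h, {homo h : x y / x < y} &
      exists g : R -> R, [/\ continuous g, cancel h g & cancel g h]].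

Definition oriented_shadowing (R : realType) (M : topologicalType)
  (dist : M -> M -> R) (phi : R -> M -> M) : Prop :=
  forall eps : R, 0 < eps -> exists2 d : R, 0 < d &
    forall xi : R -> M, pseudotrajectory dist phi d xi ->
      exists (x : M) (h : R -> R), Rep h /\
        forall t, dist (xi t) (phi (h t) x) < eps.

(* Write L for the finite limit set and separate its points. Orbits starting near a
   stable point p of L converge to p, since p is the only limit point around; by compactness
   some time-T map sends a small ball around p into a ball of half the radius, and
   finite-time tracking of pseudotrajectories turns this into a trap: a
   pseudotrajectory with small errors that comes close to p stays close to p forever.
   Reversing time gives traps at unstable points, and compactness shows that a
   pseudotrajectory far from the unstable points comes close to a stable point within
   a bounded time. So a pseudotrajectory either stays near one point of L, or it leaves
   the vicinity of the unstable points for the last time at some time c and then soon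
   falls into the trap of a stable point; in the latter case the orbit through its
   position at time c, shifted in time, is trapped in the same way and shadows it. *)

From HB Require Import structures.
From mathcomp Require Import all_boot all_order all_algebra.
From mathcomp Require Import all_classical all_reals all_analysis.
From mathcomp Require Import ring lra.
Import Order.TTheory GRing.Theory Num.Theory.
Import numFieldNormedType.Exports.
Local Open Scope classical_set_scope.
Local Open Scope ring_scope.
Set Implicit Arguments. Unset Strict Implicit. Unset Printing Implicit Defensive.

Lemma near_finite_forall (I : eqType) (T : Type) (F : set_system T)
    (A : set I) (P : I -> T -> Prop) :
  Filter F -> finite_set A -> (forall i, A i -> \forall x \near F, P i x) ->
  \forall x \near F, forall i, A i -> P i x.
Proof.
move=> FF /finite_seqP [s ->] {A}; elim: s => [|i s IH] Hnear.
  by apply: nearW => x j.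
have [Pi Ps] : (\forall x \near F, P i x) /\ \forall x \near F, forall j, [set` s] j -> P j x.
  split; first exact/Hnear/mem_head.
  by apply: IH => j js; apply: Hnear; rewrite /= inE js orbT.
apply: filterS2 Pi Ps => x Pix Psx j /=; rewrite inE => /predU1P [-> //|].
exact: Psx.
Qed.

Lemma invariant_by_steps (R : realType) (P Q : R -> Prop) (T t0 : R) :
  0 < T -> (forall a, P a -> P (a + T) /\ forall s, 0 <= s <= T -> Q (a + s)) ->
  P t0 -> forall t, t0 <= t -> Q t.
Proof.
move=> T0 step Pt0 t t0t.
have Pn (n : nat) : P (t0 + n%:R * T).
  elim: n => [|n IH]; first by rewrite mul0r addr0.
  by rewrite -natr1 mulrDl mul1r addrA; exact: (step _ IH).1.
set n := Num.truncn ((t - t0) / T).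
have /andP [nle ltn] : n%:R <= (t - t0) / T < n.+1%:R.
  by apply: truncn_itv; rewrite divr_ge0 // ?subr_ge0 // ltW.
rewrite ler_pdivlMr // in nle; rewrite ltr_pdivrMr // -natr1 mulrDl mul1r in ltn.
have := (step _ (Pn n)).2 (t - (t0 + n%:R * T)); rewrite [_ + (t - _)]addrC subrK; apply.
by apply/andP; split; lra.
Qed.

Lemma at_right0_ex (R : realType) (P : R -> Prop) :
  (\forall r \near 0^'+, P r) -> exists2 r, 0 < r & P r.
Proof.
move=> Pr; near (0:R)^'+ => r; exists r; near: r; [exact: nbhs_right_gt | exact: Pr].
Unshelve. all: by end_near.
Qed.

Lemma near_at_right0_antitone (R : realType) (A : Prop) (P : R -> Prop) :
  (forall r r', r' <= r -> P r -> P r') -> (A -> exists2 r, 0 < r & P r) ->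
  \forall r \near 0^'+, A -> P r.
Proof.
move=> antiP; have [a /(_ a) [r r0 Pr] | nA _] := pselect A; last first.
  by apply: nearW => r /nA.
near=> r' => _; apply: antiP Pr; near: r'; exact: nbhs_right_le.
Unshelve. all: by end_near.
Qed.

Lemma has_sup_last (R : realType) (S : set R) :
  has_sup S -> exists2 c, S c & forall t, c + 1 <= t -> ~ S t.
Proof.
move=> supS; have [c Sc supc] := sup_adherent ltr01 supS.
by exists c => // t ct /(sup_upper_bound supS); lra.
Qed.

Lemma Rep_addr (R : realType) (c : R) : Rep (fun t => t + c).
Proof.
have addr_cont (a : R) : continuous (fun t : R => t + a).
  by move=> t; apply: cvgD; [exact: cvg_id | exact: cvg_cst].
split=> // [x y|]; first by rewrite ltrD2r.
by exists (fun t => t - c); split=> // t; rewrite ?addrK ?subrK.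
Qed.

Section Metric.
Variables (R : realType) (M : topologicalType) (dist : M -> M -> R).
Hypothesis Hm : metric_inducing dist.

Lemma dist_ge0 x y : 0 <= dist x y. Proof. by case: Hm. Qed.
Lemma dist_eq0 x y : dist x y = 0 <-> x = y. Proof. by case: Hm. Qed.
Lemma distC x y : dist x y = dist y x. Proof. by case: Hm. Qed.
Lemma dist_triangle x y z : dist x z <= dist x y + dist y z. Proof. by case: Hm. Qed.
Lemma dist_nbhsP x A :
  nbhs x A <-> exists2 e : R, 0 < e & [set y | dist x y < e] `<=` A.
Proof. by case: Hm. Qed.
Lemma distxx x : dist x x = 0. Proof. exact/dist_eq0. Qed.

Lemma dist_triangle_from q x y : dist x y <= dist q x + dist q y.
Proof. by rewrite (distC q x); exact: dist_triangle. Qed.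

Lemma nbhs_dist_lt x e : 0 < e -> nbhs x [set y | dist x y < e].
Proof. by move=> e0; apply/dist_nbhsP; exists e. Qed.

Lemma dist_small_eq x y : (forall e, 0 < e -> dist x y < e) -> x = y.
Proof.
move=> small; apply/dist_eq0/eqP; rewrite eq_le dist_ge0 andbT.
by apply/ler_addgt0Pr => e e0; rewrite add0r ltW // small.
Qed.

Lemma open_dist_lt (P : set M) r : open [set z | exists2 p, P p & dist p z < r].
Proof.
rewrite openE => y [p Pp py]; apply/dist_nbhsP; exists (r - dist p y).
  by rewrite subr_gt0.
move=> z /= yz; exists p => //; apply: le_lt_trans (dist_triangle p y z) _.
by rewrite -ltrBrDl.
Qed.

Lemma closure_dist_lt (A : set M) z e : closure A z -> 0 < e ->
  exists2 y, A y & dist z y < e.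
Proof. by move=> Az e0; have [y [Ay zy]] := Az _ (nbhs_dist_lt z e0); exists y. Qed.

Lemma closed_dist_ge (Q : set M) r : closed [set x | forall q, Q q -> r <= dist q x].
Proof.
move=> z Qz q Qq; apply/ler_addgt0Pr => e e0.
have [y Qy zy] := closure_dist_lt Qz e0.
apply: le_trans (Qy q Qq) _; apply: le_trans (dist_triangle q z y) _.
by rewrite lerD2l ltW // distC.
Qed.

Lemma closed_dist_le p r : closed [set x | dist p x <= r].
Proof.
move=> z pz; apply/ler_addgt0Pr => e e0.
have [y py zy] := closure_dist_lt pz e0.
by apply: le_trans (dist_triangle p y z) _; rewrite lerD // distC ltW.
Qed.

Lemma finite_set_separated (A : set M) : finite_set A ->
  exists2 rho : R, 0 < rho & forall p q, A p -> A q -> dist p q < rho -> p = q.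
Proof.
move=> finA.
have sep : \forall rho \near 0^'+,
    forall p, A p -> forall q, A q -> dist p q < rho -> p = q.
  apply: near_finite_forall => // p Ap; apply: near_finite_forall => // q Aq.
  have [<-|pq] := pselect (p = q); first exact: nearW.
  have dpq : 0 < dist p q.
    by rewrite lt_neqAle dist_ge0 andbT; apply/eqP => /esym/dist_eq0.
  near=> rho => lt_pq; suff: rho < dist p q by rewrite ltNge (ltW lt_pq).
  by near: rho; exact: nbhs_right_lt.
have [rho rho0 Hrho] := at_right0_ex sep.
by exists rho => // p q /Hrho; apply.
Unshelve. all: by end_near.
Qed.

End Metric.

Section Flow.
Variables (R : realType) (M : topologicalType) (dist : M -> M -> R).
Hypothesis Hm : metric_inducing dist.
Variable phi : R -> M -> M.
Hypothesis Hf : is_flow phi.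

Lemma flow0 x : phi 0 x = x. Proof. by case: Hf. Qed.
Lemma flowD s t x : phi (s + t) x = phi s (phi t x). Proof. by case: Hf. Qed.
Lemma flowNK t x : phi (- t) (phi t x) = x. Proof. by rewrite -flowD addNr flow0. Qed.

Lemma flow_continuous t : continuous (phi t).
Proof.
case: Hf => cf _ _ x.
exact: (continuous2_cvg _ (cf (t, x)) (cvg_cst t) cvg_id).
Qed.

Lemma flow_joint_dist s x e : 0 < e -> exists2 a : R, 0 < a & exists2 b : R, 0 < b &
  forall s' y, `|s - s'| < a -> dist x y < b -> dist (phi s x) (phi s' y) < e.
Proof.
move=> e0; case: Hf => cf _ _.
have [[A1 A2] /= [/nbhs_ballP [a a0 aA1] /(dist_nbhsP Hm) [b b0 bA2]] A12] :=
  cf (s, x) _ (nbhs_dist_lt Hm (phi s x) e0).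
exists a => //; exists b => // s' y sa yb.
by apply: (A12 (s', y)); split; [exact: aA1 | exact: bA2].
Qed.

Lemma pseudotrajectoryW d d' xi : d <= d' ->
  pseudotrajectory dist phi d xi -> pseudotrajectory dist phi d' xi.
Proof. by move=> dd' xid t s s01; apply: lt_le_trans (xid t s s01) dd'. Qed.

Lemma orbit_pseudotrajectory d c x : 0 < d ->
  pseudotrajectory dist phi d (fun t => phi (t + c) x).
Proof. by move=> d0 t s _; rewrite -flowD addrA (addrC s) (distxx Hm). Qed.

Lemma omega_limit_dist x y : omega_limit phi x y ->
  forall T e, 0 < e -> exists2 t, T <= t & dist y (phi t x) < e.
Proof.
move=> ωy T e e0; have [_ [t Tt <-] yt] := closure_dist_lt Hm (ωy T I) e0.
by exists t.
Qed.

Lemma omega_limit_unstable x q :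
  lyapunov_unstable phi q -> omega_limit phi x q -> x = q.
Proof.
move=> Uq ωq; apply/esym/(dist_small_eq Hm) => e e0.
have [U /(dist_nbhsP Hm) [b b0 bU] qU] := Uq _ (nbhs_dist_lt Hm q e0).
have [t t0 qt] := omega_limit_dist ωq 0 b0.
by rewrite -(flowNK t x); apply: qU; [rewrite oppr_le0 | exact: bU].
Qed.

Definition forward_trap (p : M) (r e : R) := forall xi,
  pseudotrajectory dist phi r xi -> forall t0, dist p (xi t0) < r ->
  forall t, t0 <= t -> dist p (xi t) < e.

Definition backward_trap (p : M) (r e : R) := forall xi,
  pseudotrajectory dist phi r xi -> forall t0, dist p (xi t0) < r ->
  forall t, t <= t0 -> dist p (xi t) < e.

Lemma forward_trapW p r r' e : r' <= r -> forward_trap p r e -> forward_trap p r' e.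
Proof.
move=> r'r trap xi xir' t0 pt0; apply: trap; first exact: pseudotrajectoryW xir'.
exact: lt_le_trans r'r.
Qed.

Lemma backward_trapW p r r' e : r' <= r -> backward_trap p r e -> backward_trap p r' e.
Proof.
move=> r'r trap xi xir' t0 pt0; apply: trap; first exact: pseudotrajectoryW xir'.
exact: lt_le_trans r'r.
Qed.

Lemma lyapunov_stable_dist p : lyapunov_stable phi p -> forall e, 0 < e ->
  exists2 del : R, 0 < del &
    forall t x, 0 <= t -> dist p x < del -> dist p (phi t x) < e.
Proof.
move=> Sp e e0; have [U /(dist_nbhsP Hm) [del del0 delU] stay] := Sp _ (nbhs_dist_lt Hm p e0).
by exists del => // t x t0 /delU; exact: stay.
Qed.

Section Compact.
Hypothesis Hc : compact [set: M].

Lemma omega_limit_exists x : exists y, omega_limit phi x y.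
Proof.
pose F := (fun t => phi t x) @ (+oo : set_system R).
have PF : ProperFilter F by exact: fmap_proper_filter.
have [y [_ Fy]] := Hc PF filterT.
exists y => T _; rewrite clusterE in Fy; apply: Fy.
exists T; split; first exact: num_real.
by move=> t Tt; exists t => //; exact: ltW.
Qed.

Lemma flow_uniform_hitting (K V : set M) : compact K -> open V ->
  (forall x, K x -> exists2 t, 0 <= t & V (phi t x)) ->
  exists2 T, 0 < T & forall x, K x -> exists2 t, 0 <= t <= T & V (phi t x).
Proof.
move=> cK oV hit.
suff: \forall T \near +oo, K `<=` [set x | exists2 t, 0 <= t <= T & V (phi t x)].
  by case/pinfty_ex_gt0 => T T0 KT; exists T.
apply: (compact_near_coveringP K).1 => // x /hit [t t0 Vt].
exists (phi t @^-1` V, [set T | t < T]).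
  split; first exact: flow_continuous (open_nbhs_nbhs (conj oV Vt)).
  by exists t; split; [exact: num_real | by []].
by move=> [y T] [/= Vy tT]; exists t => //; rewrite t0 ltW.
Qed.

Lemma flow_equicont01_at x eta : 0 < eta ->
  \forall y \near x, forall s, 0 <= s <= 1 -> dist (phi s x) (phi s y) < eta.
Proof.
move=> eta0; have eta2 : 0 < eta / 2 by rewrite divr_gt0.
have c01 : compact [set s : R | 0 <= s <= 1].
  by rewrite -(set_itvcc 0 1); exact: segment_compact.
apply: (compact_near_coveringP _).1 c01 _ _ _ _ _ => s _.
have [a a0 [b b0 ab]] := flow_joint_dist s x eta2.
exists ([set s' | `|s - s'| < a], [set y | dist x y < b]).
  by split; [apply/nbhs_ballP; exists a | exact: nbhs_dist_lt].
move=> [s' y] [/= sa yb]; apply: le_lt_trans (dist_triangle Hm _ (phi s x) _) _.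
by rewrite (distC Hm (phi s' x)) [eta]splitr ltrD // ab // (distxx Hm).
Qed.

Lemma flow_equicont01 eta : 0 < eta -> exists2 g : R, 0 < g & forall x y,
  dist x y < g -> forall s, 0 <= s <= 1 -> dist (phi s x) (phi s y) < eta.
Proof.
move=> eta0; have eta2 : 0 < eta / 2 by rewrite divr_gt0.
suff: \forall g \near 0^'+, [set: M] `<=` [set x | forall y,
    dist x y < g -> forall s, 0 <= s <= 1 -> dist (phi s x) (phi s y) < eta].
  by case/at_right0_ex => g g0 Hg; exists g => // x; exact: Hg.
apply: (compact_near_coveringP _).1 Hc _ _ _ _ _ => x _.
have /(dist_nbhsP Hm) [b b0 bx] := flow_equicont01_at x eta2.
have b2 : 0 < b / 2 by rewrite divr_gt0.
exists ([set x' | dist x x' < b / 2], [set g | 0 < g < b / 2]).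
  split; first exact: nbhs_dist_lt.
  exists (b / 2) => // g; rewrite /ball /= sub0r normrN => gb g0.
  by rewrite g0 (le_lt_trans (ler_norm g)).
move=> [x' g] [/= xx' /andP [_ gb]] y x'y s s01.
have xy : dist x y < b.
  by apply: le_lt_trans (dist_triangle Hm x x' y) _; rewrite [b]splitr ltrD // (lt_trans x'y).
apply: le_lt_trans (dist_triangle Hm _ (phi s x) _) _.
rewrite (distC Hm (phi s x')) [eta]splitr ltrD ?bx //.
by rewrite /= (lt_trans xx') // ltr_pdivrMr // ltr_pMr // ltr1n.
Qed.

Lemma pseudotrajectory_tracks_nat (n : nat) eta : 0 < eta ->
  exists2 d : R, 0 < d & forall xi, pseudotrajectory dist phi d xi ->
    forall t0 s, 0 <= s <= n%:R -> dist (xi (t0 + s)) (phi s (xi t0)) < eta.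
Proof.
elim: n eta => [|n IH] eta eta0.
  exists 1 => // xi _ t0 s /andP [s0 s_le0].
  have -> : s = 0 by apply/eqP; rewrite eq_le s_le0 s0.
  by rewrite addr0 flow0 (distxx Hm).
have eta2 : 0 < eta / 2 by rewrite divr_gt0.
have [g g0 gphi] := flow_equicont01 eta2.
have gm : 0 < Num.min g (eta / 2) by rewrite lt_min g0.
have [d d0 dxi] := IH _ gm.
exists (Num.min d (eta / 2)); first by rewrite lt_min d0.
move=> xi xid t0 s /andP [s0 sn1].
have {}dxi : forall s, 0 <= s <= n%:R ->
    dist (xi (t0 + s)) (phi s (xi t0)) < Num.min g (eta / 2).
  by apply: dxi; apply: pseudotrajectoryW xid; rewrite ge_min lexx.
have [sn|ns] := leP s n%:R.
  apply: lt_le_trans (dxi s _) _; first by rewrite s0 sn.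
  by rewrite ge_min (_ : eta / 2 <= eta) ?orbT //; lra.
have u01 : 0 <= s - n%:R <= 1 by rewrite -natr1 in sn1; apply/andP; split; lra.
have -> : t0 + s = t0 + n%:R + (s - n%:R) by ring.
rewrite -[s in phi s](subrK n%:R) flowD.
apply: le_lt_trans (dist_triangle Hm _ (phi (s - n%:R) (xi (t0 + n%:R))) _) _.
rewrite [eta]splitr ltrD //.
  by apply: lt_le_trans (xid _ _ u01) _; rewrite ge_min lexx orbT.
apply: gphi u01; apply: lt_le_trans (dxi n%:R _) _; first by rewrite ler0n lexx.
by rewrite ge_min lexx.
Qed.

Lemma pseudotrajectory_tracks T eta : 0 < eta -> exists2 d : R, 0 < d &
  forall xi, pseudotrajectory dist phi d xi ->
    forall t0 s, 0 <= s <= T -> dist (xi (t0 + s)) (phi s (xi t0)) < eta.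
Proof.
move=> eta0; have [d d0 dxi] := pseudotrajectory_tracks_nat (Num.truncn T).+1 eta0.
exists d => // xi xid t0 s /andP [s0 sT]; apply: dxi; rewrite ?s0 //=.
exact: le_trans sT (ltW (truncnS_gt T)).
Qed.

Section IsolatedStable.
Variables (p : M) (rho : R).
Hypotheses (rho0 : 0 < rho) (Sp : lyapunov_stable phi p).
Hypothesis p_isolated : forall y, limit_set phi y -> dist p y < rho -> y = p.

Lemma lyapunov_stable_basin :
  exists2 del : R, 0 < del & forall x, dist p x < del -> omega_limit phi x p.
Proof.
have rho2 : 0 < rho / 2 by rewrite divr_gt0.
have [del del0 stay] := lyapunov_stable_dist Sp rho2.
exists del => // x px; have [y ωy] := omega_limit_exists x.
suff <- : y = p by [].
apply: p_isolated; first by exists x => //; left.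
suff : dist p y <= rho / 2 by lra.
apply/ler_addgt0Pr => e e0; have [t t0 yt] := omega_limit_dist ωy 0 e0.
apply: le_trans (dist_triangle Hm p (phi t x) y) _.
by rewrite lerD ?ltW // ?stay // (distC Hm).
Qed.

Lemma lyapunov_stable_contraction e : 0 < e -> exists del T : R,
  [/\ 0 < del, 0 < T,
      forall t x, 0 <= t -> dist p x < del -> dist p (phi t x) < e &
      forall x, dist p x <= del / 2 -> dist p (phi T x) < del / 4].
Proof.
move=> e0; have [D D0 basin] := lyapunov_stable_basin.
have [del1 del10 stay1] := lyapunov_stable_dist Sp e0.
pose del := Num.min D del1.
have del0 : 0 < del by rewrite lt_min D0.
have delD : del <= D by rewrite ge_min lexx.
have del_del1 : del <= del1 by rewrite ge_min lexx orbT.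
have del4 : 0 < del / 4 by rewrite divr_gt0.
have [del2 del20 stay2] := lyapunov_stable_dist Sp del4.
have cK : compact [set x | dist p x <= del / 2].
  by apply: (subclosed_compact _ Hc) => //; exact: closed_dist_le.
have [|T T0 hitT] := flow_uniform_hitting cK (open_dist_lt Hm [set p] del2).
  move=> x /= px; have ωp : omega_limit phi x p.
    by apply: basin; apply: le_lt_trans px _; lra.
  by have [t t0 pt] := omega_limit_dist ωp 0 del20; exists t => //; exists p.
exists del, T; split => // [t x t0 px | x /hitT [t /andP [t0 tT] [_ -> pt]]].
  by apply: stay1 => //; apply: lt_le_trans px del_del1.
by rewrite -(subrK t T) flowD stay2 // subr_ge0.
Qed.

Lemma lyapunov_stable_forward_trap e : 0 < e -> exists2 r : R, 0 < r & forward_trap p r e.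
Proof.
move=> e0; have e2 : 0 < e / 2 by rewrite divr_gt0.
have [del [T [del0 T0 stay contract]]] := lyapunov_stable_contraction e2.
have eta0 : 0 < Num.min (e / 2) (del / 4) by rewrite lt_min e2 divr_gt0.
have [d d0 track] := pseudotrajectory_tracks T eta0.
exists (Num.min d (del / 2)); first by rewrite lt_min d0 divr_gt0.
move=> xi xid t0 pt0.
apply: (invariant_by_steps (P := fun a => dist p (xi a) <= del / 2) T0); last first.
  by rewrite ltW // (lt_le_trans pt0) // ge_min lexx orbT.
move=> a pa; have {}track : forall s, 0 <= s <= T ->
    dist (phi s (xi a)) (xi (a + s)) < Num.min (e / 2) (del / 4).
  move=> s s0T; rewrite (distC Hm); apply: track s0T.
  by apply: pseudotrajectoryW xid; rewrite ge_min lexx.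
split=> [|s s0T].
  apply: le_trans (dist_triangle Hm p (phi T (xi a)) _) _.
  have := track T; rewrite lexx ltW // lt_min => /(_ isT) /andP [_ h].
  by have := contract _ pa; lra.
apply: le_lt_trans (dist_triangle Hm p (phi s (xi a)) _) _.
have := track s s0T; rewrite lt_min => /andP [h _].
have : dist p (phi s (xi a)) < e / 2 by apply: stay; [case/andP: s0T | lra].
lra.
Qed.

End IsolatedStable.

Lemma pseudotrajectory_enters_stable ru rs :
  (forall y, limit_set phi y -> lyapunov_stable phi y \/ lyapunov_unstable phi y) ->
  0 < ru -> 0 < rs ->
  exists T : R, exists2 d : R, 0 < d & forall xi, pseudotrajectory dist phi d xi ->
    forall t0, (forall q, limit_set phi q -> lyapunov_unstable phi q -> ru <= dist q (xi t0)) ->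
    exists s p, [/\ 0 <= s <= T, limit_set phi p, lyapunov_stable phi p &
                    dist p (xi (t0 + s)) < rs].
Proof.
move=> SUL ru0 rs0; have rs2 : 0 < rs / 2 by rewrite divr_gt0.
pose Q q := limit_set phi q /\ lyapunov_unstable phi q.
have cK : compact [set x | forall q, Q q -> ru <= dist q x].
  by apply: (subclosed_compact _ Hc) => //; exact: closed_dist_ge.
have [|T T0 hitT] := flow_uniform_hitting cK
    (open_dist_lt Hm (fun p => limit_set phi p /\ lyapunov_stable phi p) (rs / 2)).
  move=> x farx; have [y ωy] := omega_limit_exists x.
  have Ly : limit_set phi y by exists x => //; left.
  have Sy : lyapunov_stable phi y.
    case: (SUL y Ly) => // Uy; have := farx y (conj Ly Uy).
    by rewrite (omega_limit_unstable Uy ωy) (distxx Hm); lra.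
  by have [t t0 yt] := omega_limit_dist ωy 0 rs2; exists t => //; exists y.
have [d d0 track] := pseudotrajectory_tracks T rs2.
exists T, d => // xi xid t0 far.
have [s s0T [p [Lp Sp] ps]] := hitT (xi t0) (fun q '(conj Lq Uq) => far q Lq Uq).
exists s, p; split => //; apply: le_lt_trans (dist_triangle Hm p (phi s (xi t0)) _) _.
by have := track xi xid t0 s s0T; rewrite (distC Hm); lra.
Qed.

End Compact.
End Flow.

Definition flow_rev (R : realType) (M : Type) (phi : R -> M -> M) : R -> M -> M :=
  fun t x => phi (- t) x.

Section Reversal.
Variables (R : realType) (M : topologicalType) (dist : M -> M -> R).
Hypothesis Hm : metric_inducing dist.
Variable phi : R -> M -> M.
Hypothesis Hf : is_flow phi.

Lemma is_flow_rev : is_flow (flow_rev phi).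
Proof.
case: Hf => cf f0 fD; split=> [[s x]|x|s t x]; rewrite /flow_rev ?oppr0 ?opprD //=.
apply: (continuous2_cvg _ (cf (- s, x))); last exact: cvg_snd.
by apply: cvgN; exact: cvg_fst.
Qed.

Lemma omega_limit_rev x : omega_limit (flow_rev phi) x `<=` alpha_limit phi x.
Proof.
move=> y ωy T _; apply: closureS (ωy (- T) I) => _ [t Tt <-].
by exists (- t) => //=; rewrite lerNl.
Qed.

Lemma alpha_limit_rev x : alpha_limit (flow_rev phi) x `<=` omega_limit phi x.
Proof.
move=> y αy T _; apply: closureS (αy (- T) I) => _ [t tT <-].
by exists (- t) => //=; rewrite lerNr.
Qed.

Lemma limit_set_rev : limit_set (flow_rev phi) `<=` limit_set phi.
Proof.
move=> y [x _ [/omega_limit_rev ωy | /alpha_limit_rev αy]].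
  by exists x => //; right.
by exists x => //; left.
Qed.

Lemma lyapunov_unstable_rev p :
  lyapunov_unstable phi p -> lyapunov_stable (flow_rev phi) p.
Proof.
move=> Up V pV; have [U pU stay] := Up V pV.
by exists U => // t x t0 Ux; apply: stay => //; rewrite oppr_le0.
Qed.

Section Compact.
Hypothesis Hc : compact [set: M].

Lemma pseudotrajectory_rev d' : 0 < d' -> exists2 d : R, 0 < d & forall xi,
  pseudotrajectory dist phi d xi ->
  pseudotrajectory dist (flow_rev phi) d' (fun t => xi (- t)).
Proof.
move=> d'0; have [g g0 gphi] := flow_equicont01 Hm is_flow_rev Hc d'0.
exists g => // xi xid t s s01 /=.
have := xid (- (t + s)) s s01; rewrite opprD addrNK => close.
by have := gphi _ _ close s s01; rewrite /flow_rev (flowNK Hf) (distC Hm).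
Qed.

Lemma lyapunov_unstable_backward_trap p rho : 0 < rho -> lyapunov_unstable phi p ->
  (forall y, limit_set phi y -> dist p y < rho -> y = p) ->
  forall e, 0 < e -> exists2 r : R, 0 < r & backward_trap dist phi p r e.
Proof.
move=> rho0 Up p_isolated e e0.
have [r' r'0 trap] := lyapunov_stable_forward_trap Hm is_flow_rev Hc rho0
  (lyapunov_unstable_rev Up) (fun y Ly => p_isolated y (limit_set_rev Ly)) e0.
have [d d0 rev] := pseudotrajectory_rev r'0.
exists (Num.min r' d); first by rewrite lt_min r'0.
move=> xi xid t0 pt0 t tt0; rewrite -[t]opprK.
apply: (trap _ (rev xi _) (- t0)); rewrite ?opprK ?lerN2 //.
  by apply: pseudotrajectoryW xid; rewrite ge_min lexx orbT.
by apply: lt_le_trans pt0 _; rewrite ge_min lexx.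
Qed.

Lemma limit_set_traps e : finite_set (limit_set phi) -> 0 < e ->
  \forall r \near 0^'+, forall p, limit_set phi p ->
    (lyapunov_stable phi p -> forward_trap dist phi p r e) /\
    (lyapunov_unstable phi p -> backward_trap dist phi p r e).
Proof.
move=> finL e0; have [rho rho0 sep] := finite_set_separated Hm finL.
apply: near_finite_forall => // p Lp.
have p_isolated y : limit_set phi y -> dist p y < rho -> y = p.
  by move=> Ly /(sep _ _ Lp Ly).
have near_fwd := near_at_right0_antitone (fun r r' => @forward_trapW R M dist phi p r r' e)
  (fun Sp => lyapunov_stable_forward_trap Hm Hf Hc rho0 Sp p_isolated e0).
have near_bwd := near_at_right0_antitone (fun r r' => @backward_trapW R M dist phi p r r' e)
  (fun Up => lyapunov_unstable_backward_trap rho0 Up p_isolated e0).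
by near=> r; split; near: r.
Unshelve. all: by end_near.
Qed.

End Compact.
End Reversal.

Definition shadowed (R : realType) (M : topologicalType) (dist : M -> M -> R)
    (phi : R -> M -> M) (eps : R) (xi : R -> M) :=
  exists (x : M) (h : R -> R), Rep h /\ forall t, dist (xi t) (phi (h t) x) < eps.

Section Shadowing.
Variables (R : realType) (M : topologicalType) (dist : M -> M -> R).
Hypothesis Hm : metric_inducing dist.
Variable phi : R -> M -> M.
Hypothesis Hf : is_flow phi.
Variables (L : set M) (eps e r Te : R) (xi : R -> M).
Hypotheses (r0 : 0 < r) (ee_eps : e + e <= eps).
Hypothesis L_singular : forall p, L p -> singularity phi p.
Hypothesis L_separated : forall p q, L p -> L q -> dist p q < e + e -> p = q.
Hypothesis stable_trap :
  forall p, L p -> lyapunov_stable phi p -> forward_trap dist phi p r e.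
Hypothesis unstable_trap :
  forall p, L p -> lyapunov_unstable phi p -> backward_trap dist phi p r e.
Hypothesis xi_pseudo : pseudotrajectory dist phi r xi.
Hypothesis xi_tracks : forall t0 s, 0 <= s <= Te + 1 ->
  dist (xi (t0 + s)) (phi s (xi t0)) < Num.min (r / 2) eps.
Hypothesis xi_enters : forall t0,
  (forall q, L q -> lyapunov_unstable phi q -> r <= dist q (xi t0)) ->
  exists s p, [/\ 0 <= s <= Te, L p, lyapunov_stable phi p & dist p (xi (t0 + s)) < r / 2].

Let half_r_lt : r / 2 < r. Proof. by rewrite ltr_pdivrMr // ltr_pMr // ltr1n. Qed.

Let near_unstable t := exists q, [/\ L q, lyapunov_unstable phi q & dist q (xi t) < r].

Lemma far_unstable t : ~ near_unstable t ->
  forall q, L q -> lyapunov_unstable phi q -> r <= dist q (xi t).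
Proof. by move=> far q Lq Uq; rewrite leNgt; apply/negP => qt; apply: far; exists q. Qed.

Lemma shadowed_at_rest p : L p -> (forall t, dist p (xi t) < e) ->
  shadowed dist phi eps xi.
Proof.
move=> Lp pxi; exists p, (fun t => t + 0); split=> [|t]; first exact: Rep_addr.
rewrite L_singular // (distC Hm); apply: lt_le_trans (pxi t) (le_trans _ ee_eps).
by rewrite lerDl (le_trans (dist_ge0 Hm p (xi t))) // ltW.
Qed.

Lemma shadowed_common_center :
  (forall s s', exists p, [/\ L p, dist p (xi s) < e & dist p (xi s') < e]) ->
  shadowed dist phi eps xi.
Proof.
move=> center; have [p [Lp p0 _]] := center 0 0.
apply: (shadowed_at_rest Lp) => s; have [q [Lq q0 qs]] := center 0 s.
suff <- : q = p by [].
apply: L_separated => //; apply: le_lt_trans (dist_triangle Hm q (xi 0) p) _.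
by rewrite (distC Hm _ p) ltrD.
Qed.

Lemma shadowed_recurrent_unstable :
  (forall t0, exists2 t, t0 <= t & near_unstable t) -> shadowed dist phi eps xi.
Proof.
move=> recur; apply: shadowed_common_center => s s'.
have [t st [q [Lq Uq qt]]] := recur (Num.max s s').
by exists q; split=> //; apply: (unstable_trap Lq Uq xi_pseudo qt);
  apply: le_trans st; rewrite le_max lexx ?orbT.
Qed.

Lemma shadowed_never_unstable :
  (forall t, ~ near_unstable t) -> shadowed dist phi eps xi.
Proof.
move=> never; apply: shadowed_common_center => t1 t2.
set t0 := Num.min t1 t2 - Te.
have [u [p [/andP [u0 uT] Lp Sp pu]]] := xi_enters (far_unstable (never t0)).
have pr : dist p (xi (t0 + u)) < r := lt_trans pu half_r_lt.
have t0s : t0 + u <= Num.min t1 t2 by rewrite /t0; lra.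
have trapped := stable_trap Lp Sp xi_pseudo pr.
by exists p; split=> //; apply: trapped; apply: le_trans t0s _; rewrite ge_min lexx ?orbT.
Qed.

Lemma shadowed_transit c : near_unstable c ->
  (forall t, c + 1 <= t -> ~ near_unstable t) -> shadowed dist phi eps xi.
Proof.
move=> [q [Lq Uq qc]] later.
have [s [p [/andP [s0 sT] Lp Sp ps]]] := xi_enters (far_unstable (later _ (lexx _))).
pose tau := c + 1 + s; pose z t := phi (t + - c) (xi c).
have z_pseudo : pseudotrajectory dist phi r z := orbit_pseudotrajectory Hm Hf _ _ r0.
have zc : z c = xi c by rewrite /z addrN flow0.
have tracks t : c <= t <= tau -> dist (xi t) (z t) < Num.min (r / 2) eps.
  move=> /andP [ct ttau]; have := @xi_tracks c (t - c); rewrite (addrC c) subrK; apply.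
  by apply/andP; split; rewrite /tau in ttau; lra.
exists (xi c), (fun t => t + - c); split=> [|t]; first exact: Rep_addr.
change (dist (xi t) (z t) < eps).
have [tc|ct] := leP t c.
  apply: le_lt_trans (dist_triangle_from Hm q _ _) _; apply: lt_le_trans ee_eps; rewrite ltrD //.
    exact: (unstable_trap Lq Uq xi_pseudo qc).
  have qzc : dist q (z c) < r by rewrite zc.
  exact: (unstable_trap Lq Uq z_pseudo qzc).
have [ttau|taut] := leP t tau.
  by have := tracks t; rewrite (ltW ct) ttau lt_min => /(_ isT) /andP [].
have ptau : dist p (z tau) < r.
  apply: le_lt_trans (dist_triangle Hm p (xi tau) _) _.
  have c_tau : c <= tau by rewrite /tau; lra.
  have := tracks tau; rewrite c_tau lexx lt_min => /(_ isT) /andP [h _].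
  by rewrite [r]splitr ltrD.
apply: le_lt_trans (dist_triangle_from Hm p _ _) _; apply: lt_le_trans ee_eps; rewrite ltrD //.
  exact: (stable_trap Lp Sp xi_pseudo (lt_trans ps half_r_lt)) (ltW taut).
exact: (stable_trap Lp Sp z_pseudo ptau) (ltW taut).
Qed.

Lemma shadowed_pseudotrajectory : shadowed dist phi eps xi.
Proof.
have [recur|not_recur] := pselect (forall t0, exists2 t, t0 <= t & near_unstable t).
  exact: shadowed_recurrent_unstable.
have [T1 T1_later] : exists T1, forall t, T1 <= t -> ~ near_unstable t.
  apply: contrapT => none; apply: not_recur => t0; apply: contrapT => no_later.
  by apply: none; exists t0 => t t0t Nt; apply: no_later; exists t.
have [[t0 Nt0]|never] := pselect (exists t, near_unstable t); last first.
  by apply: shadowed_never_unstable => t Nt; apply: never; exists t.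
have [|c Nc later] := has_sup_last (S := near_unstable).
  split; first by exists t0.
  by exists T1 => t Nt; rewrite leNgt; apply/negP => /ltW /T1_later.
exact: shadowed_transit Nc later.
Qed.

End Shadowing.

Theorem corollary1p3 (R : realType) (M : topologicalType)
  (dist : M -> M -> R) (phi : R -> M -> M) :
  metric_inducing dist ->
  topological_manifold R M ->
  compact [set: M] ->
  is_flow phi ->
  finite_set (limit_set phi) ->
  (forall p, limit_set phi p ->
     singularity phi p /\ (lyapunov_stable phi p \/ lyapunov_unstable phi p)) ->
  oriented_shadowing dist phi.
Proof.
move=> Hm _ Hc Hf finL L_sing_SU eps eps0.
have [rho rho0 L_sep] := finite_set_separated Hm finL.
pose e := Num.min eps rho / 2.
have e0 : 0 < e by rewrite divr_gt0 // lt_min eps0.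
have [ee_eps ee_rho] : e + e <= eps /\ e + e <= rho.
  by rewrite -splitr ge_min lexx (ge_min rho) lexx orbT.
have [r r0 traps] := at_right0_ex (limit_set_traps Hm Hf Hc finL e0).
have r2 : 0 < r / 2 by rewrite divr_gt0.
have [Te [dE dE0 enters]] :=
  pseudotrajectory_enters_stable Hm Hf Hc (fun y Ly => (L_sing_SU y Ly).2) r0 r2.
have eta0 : 0 < Num.min (r / 2) eps by rewrite lt_min r2.
have [dT dT0 tracks] := pseudotrajectory_tracks Hm Hf Hc (Te + 1) eta0.
exists (Num.min r (Num.min dE dT)); first by rewrite !lt_min r0 dE0.
move=> xi xid; have pseudo d : Num.min r (Num.min dE dT) <= d -> pseudotrajectory dist phi d xi.
  by move=> le_d; apply: pseudotrajectoryW xid.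
apply: (shadowed_pseudotrajectory (L := limit_set phi) (Te := Te) Hm Hf r0 ee_eps)
  => [p /L_sing_SU [] // | p q Lp Lq pq | p Lp | p Lp | | t0 s sTe | t0 far].
- by apply: L_sep => //; apply: lt_le_trans ee_rho.
- exact: (traps p Lp).1.
- exact: (traps p Lp).2.
- by apply: (pseudo r); rewrite ge_min lexx.
- by apply: tracks => //; apply: (pseudo dT); rewrite !ge_min lexx !orbT.
- by apply: enters far; apply: (pseudo dE); rewrite !ge_min lexx !orbT.
Qed.
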